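(* For every $T\in\mathcal M_{\mathcal G,\Gamma}$, the map $U\mapsto U^{-1}TU$ from $\mathcal A$ (with the weak topology) to $\mathcal M_{\mathcal G,\Gamma}$ (with the topology of the metric $\mathrm m_{\mathcal G,\Gamma}$) is continuous.
   Context: $(X,\Sigma,\mu)$ is a separable Lebesgue space with a non-atomic probability measure $\mu$. $\mathcal A$ is the group of invertible measure-preserving transformations of $X$, two transformations being identified if they agree outside a null set. Fix a countable family $\{A_i\}_{i\in\mathbb N}\subset\Sigma$ that generates $\Sigma$ and is dense in $\Sigma$ (for every $A\in\Sigma$ and $\varepsilon>0$ there is $i$ with $\mu(A_i\triangle A)<\varepsilon$). For $T,S\in\mathcal A$ put $\mathrm d(T,S)=\sum_{i}2^{-i}\big(\mu(TA_i\triangle SA_i)+\mu(T^{-1}A_i\triangle S^{-1}A_i)\big)$ and $\mathrm a(T,S)=\sum_{i,j}2^{-(i+j)}|\mu(TA_i\cap A_j)-\mu(SA_i\cap A_j)|$; the weak topology on $\mathcal A$ is the topology of $\mathrm d$. $\mathcal G$ is a Hausdorff locally compact group with a countable neighborhood base. Fix an at most countable family $\{K_i\}$ of compact subsets of $\mathcal G$ with nonempty interiors whose union contains a set generating $\mathcal G$. An action of $\mathcal G$ is a family $T=\{T^g\}_{g\in\mathcal G}\subset\mathcal A$ with $T^gT^h=T^{gh}$ for all $g,h$ and such that $g\mapsto\mu(T^gA\cap B)$ is continuous for all $A,B\in\Sigma$. For $U\in\mathcal A$ and an action $T$, $U^{-1}TU$ denotes the action $g\mapsto U^{-1}T^gU$.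 $\mathrm d_{\mathcal G}(T,S)=\sum_i 2^{-i}\sup_{g\in K_i}\mathrm d(T^g,S^g)$. Let $\Gamma\subset\mathcal G$ be an unbounded subset (not contained in any compact set). An action $T$ is $\Gamma$-mixing if for all $A,B\in\Sigma$ and $\varepsilon>0$ there is a compact $C\subset\mathcal G$ with $|\mu(T^gA\cap B)-\mu(A)\mu(B)|<\varepsilon$ for all $g\in\Gamma\setminus C$. $\mathcal M_{\mathcal G,\Gamma}$ is the set of all $\Gamma$-mixing actions with the leash metric $\mathrm m_{\mathcal G,\Gamma}(T,S)=\mathrm d_{\mathcal G}(T,S)+\sup_{g\in\Gamma}\mathrm a(T^g,S^g)$. *)

From HB Require Import structures.
From mathcomp Require Import all_boot all_order all_algebra.
From mathcomp Require Import all_classical all_reals all_analysis.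
Set Implicit Arguments. Unset Strict Implicit. Unset Printing Implicit Defensive.
Import Order.TTheory GRing.Theory Num.Theory.
Import numFieldNormedType.Exports.
Local Open Scope classical_set_scope.
Local Open Scope ring_scope.

Definition symd {X : Type} (A B : set X) : set X := (A `\` B) `|` (B `\` A).

(* A candidate invertible transformation: forward map and (a.e.) inverse map. *)
Record mpt (X : Type) := MPT { fw : X -> X ; bw : X -> X }.

(* image T A of a set under T (= preimage under T^{-1}) and preimage T^{-1} A *)
Definition img {X : Type} (U : mpt X) (A : set X) : set X := bw U @^-1` A.
Definition pre {X : Type} (U : mpt X) (A : set X) : set X := fw U @^-1` A.

Section Defs.
Context {R : realType} {d : measure_display} {X : measurableType d}.
Variable mu : probability X R.

Definition m (A : set X) : R := fine (mu A).

Definition nonatomic : Prop :=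
  forall A : set X, measurable A -> (0 < mu A)%E ->
    exists B, [/\ measurable B, B `<=` A, (0 < mu B)%E & (mu B < mu A)%E].

(* U is an invertible measure-preserving transformation (element of 𝒜),
   with inverse bw U modulo null sets *)
Definition is_ipt (U : mpt X) : Prop :=
  [/\ measurable_fun setT (fw U), measurable_fun setT (bw U),
      (forall A, measurable A -> mu (fw U @^-1` A) = mu A),
      (forall A, measurable A -> mu (bw U @^-1` A) = mu A) &
      ({ae mu, forall x, bw U (fw U x) = x} /\
       {ae mu, forall x, fw U (bw U x) = x})].

Variable Ai : nat -> set X.

Definition dA (U V : mpt X) : \bar R :=
  (\sum_(i <oo) ((2 ^- i) * (m (symd (img U (Ai i)) (img V (Ai i)))
                          + m (symd (pre U (Ai i)) (pre V (Ai i)))))%:E)%E.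

Definition aA (U V : mpt X) : \bar R :=
  (\sum_(i <oo) \sum_(j <oo)
     ((2 ^- (i + j)) * `| m (img U (Ai i) `&` Ai j) - m (img V (Ai i) `&` Ai j) |)%:E)%E.

Section Group.
Context {G : topologicalType}.
Variables (mulG : G -> G -> G) (invG : G -> G) (oneG : G).

Definition is_topological_group : Prop :=
  [/\ (forall a b c, mulG a (mulG b c) = mulG (mulG a b) c),
      (forall a, mulG oneG a = a /\ mulG a oneG = a),
      (forall a, mulG (invG a) a = oneG /\ mulG a (invG a) = oneG),
      continuous (fun p : G * G => mulG p.1 p.2) & continuous invG].

Definition first_countable_space : Prop :=
  forall x : G, exists B : nat -> set G,
    (forall n, nbhs x (B n)) /\ (forall U, nbhs x U -> exists n, B n `<=` U).

Definition gen_subgroup (S : set G) : set G :=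
  [set g | forall H : set G, H oneG -> (forall a b, H a -> H b -> H (mulG a b)) ->
      (forall a, H a -> H (invG a)) -> S `<=` H -> H g].

Definition unbounded (Gamma : set G) : Prop :=
  forall C : set G, compact C -> ~ (Gamma `<=` C).

Definition is_action (T : G -> mpt X) : Prop :=
  [/\ (forall g, is_ipt (T g)),
      (forall g h, {ae mu, forall x, fw (T g) (fw (T h) x) = fw (T (mulG g h)) x}) &
      (forall A B, measurable A -> measurable B ->
          continuous (fun g => m (img (T g) A `&` B)))].

Definition mixing (Gamma : set G) (T : G -> mpt X) : Prop :=
  forall A B, measurable A -> measurable B -> forall eps : R, 0 < eps ->
    exists C : set G, compact C /\
      forall g, Gamma g -> ~ C g -> `| m (img (T g) A `&` B) - m A * m B | < eps.

Variables (Kidx : set nat) (K : nat -> set G).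

Definition dG (T S : G -> mpt X) : \bar R :=
  (\sum_(i <oo | i \in Kidx)
     ((2 ^- i)%:E * ereal_sup [set dA (T g) (S g) | g in K i]))%E.

Definition leash (Gamma : set G) (T S : G -> mpt X) : \bar R :=
  (dG T S + ereal_sup [set aA (T g) (S g) | g in Gamma])%E.

End Group.
End Defs.

Definition conj {X G : Type} (U : mpt X) (T : G -> mpt X) : G -> mpt X :=
  fun g => MPT (fun x => bw U (fw (T g) (fw U x))) (fun x => bw U (bw (T g) (fw U x))).

From HB Require Import structures.
From mathcomp Require Import all_boot all_order all_algebra.
From mathcomp Require Import all_classical all_reals all_analysis.
From mathcomp Require Import ring lra.
Import Order.TTheory GRing.Theory Num.Theory.
Import numFieldNormedType.Exports.
Local Open Scope classical_set_scope.
Local Open Scope ring_scope.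

(* Write D A B for mu (A △ B) (msymd below).  Conjugation transports everything to T:
   U^-1 T^g U maps A to U^-1 (T^g (U A)), and mu (U^-1 Y ∩ B) = mu (Y ∩ U B), so U^-1 T U
   is again a Gamma-mixing action.  For continuity in U, only finitely many indices matter
   up to an error 2^-N in each weighted series.  The correlation terms are close uniformly
   in g:
     |mu (U^-1 T^g U A_i ∩ A_j) - mu (V^-1 T^g V A_i ∩ A_j)|
       <= D (U A_i) (V A_i) + D (U A_j) (V A_j).
   For the terms d (U^-1 T^g U, V^-1 T^g V) with g in a compact K_i, the sets T^g U A_j and
   T^-g U A_j depend continuously on g for D, so finitely many A_k approximate all of them
   uniformly on K_i; D (U^-1 T^g U A_j) (V^-1 T^g V A_j) is then controlled by
   D (U^-1 A_k) (V^-1 A_k) and D (U A_j) (V A_j), which are small when d (U, V) is. *)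

Section probability_m.
Context {R : realType} {d : measure_display} {X : measurableType d}.
Context {mu : probability X R}.
Local Notation msymd A B := (m mu (symd A B)).

Lemma EFin_m {A} : measurable A -> (m mu A)%:E = mu A.
Proof. by move=> mA; rewrite /m fineK // fin_num_measure. Qed.

Lemma m_ge0 A : 0 <= m mu A.
Proof. by rewrite /m fine_ge0. Qed.

Lemma m_le1 {A} : measurable A -> m mu A <= 1.
Proof. by move=> mA; rewrite -lee_fin EFin_m // probability_le1. Qed.

Lemma le_m {A B} : measurable A -> measurable B -> A `<=` B -> m mu A <= m mu B.
Proof. by move=> mA mB AB; rewrite -lee_fin !EFin_m // le_measure ?inE. Qed.

Lemma m_null {A N} : measurable A -> measurable N -> mu N = 0%E -> A `<=` N -> m mu A = 0.
Proof. by move=> mA mN N0 AN; rewrite /m (subset_measure0 mA mN AN N0). Qed.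

Lemma le_m_setU {S A B} : measurable S -> measurable A -> measurable B ->
  S `<=` A `|` B -> m mu S <= m mu A + m mu B.
Proof.
move=> mS mA mB SAB; apply: (@le_trans _ _ (m mu (A `|` B))).
  by apply: le_m => //; exact: measurableU.
by rewrite -lee_fin EFinD !EFin_m ?measureU2 //; exact: measurableU.
Qed.

Lemma measurable_symd {A B : set X} : measurable A -> measurable B -> measurable (symd A B).
Proof. by move=> mA mB; apply: measurableU; apply: measurableD. Qed.

Lemma symdC (A B : set X) : symd A B = symd B A.
Proof. by rewrite /symd setUC. Qed.

Lemma msymdd A : msymd A A = 0.
Proof. by rewrite /symd setDv setU0 /m measure0. Qed.

Lemma msymd_triangle {A B C} : measurable A -> measurable B -> measurable C ->
  msymd A C <= msymd A B + msymd B C.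
Proof.
move=> mA mB mC; apply: le_m_setU; try exact: measurable_symd.
by move=> x [[Ax nCx]|[Cx nAx]]; have [Bx|nBx] := pselect (B x);
  [right; left|left; left|left; right|right; right].
Qed.

Lemma dist_m_le_msymd {A B} : measurable A -> measurable B ->
  `|m mu A - m mu B| <= msymd A B.
Proof.
have le_sub P Q : measurable P -> measurable Q -> m mu P - m mu Q <= msymd P Q.
  move=> mP mQ; rewrite lerBlDl; apply: le_m_setU => //; first exact: measurable_symd.
  by move=> x Px; have [Qx|nQx] := pselect (Q x); [left|right; left].
move=> mA mB; rewrite ler_norml le_sub // andbT lerNl opprB symdC.
exact: le_sub.
Qed.

Lemma msymd_setI {A B A' B' : set X} : measurable A -> measurable B ->
  measurable A' -> measurable B' ->
  msymd (A `&` B) (A' `&` B') <= msymd A A' + msymd B B'.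
Proof.
move=> mA mB mA' mB'; apply: le_m_setU; try exact: measurable_symd.
  by apply: measurable_symd; apply: measurableI.
move=> x [[[Ax Bx] nx]|[[Ax Bx] nx]].
- have [A'x|nA'x] := pselect (A' x); last by left; left.
  by right; left; split => // B'x; apply: nx.
- have [A_x|nAx] := pselect (A x); last by left; right.
  by right; right; split => // B_x; apply: nx.
Qed.

Lemma dist_m_setI_le {A A' B} : measurable A -> measurable A' -> measurable B ->
  `|m mu (A `&` B) - m mu (A' `&` B)| <= msymd A A'.
Proof.
move=> mA mA' mB; have := msymd_setI mA mB mA' mB; rewrite msymdd addr0.
by apply: le_trans; apply: dist_m_le_msymd; apply: measurableI.
Qed.

Lemma msymdE {A B} : measurable A -> measurable B ->
  msymd A B = m mu A + m mu B - 2 * m mu (A `&` B).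
Proof.
move=> mA mB; have mAB := measurableI _ _ mA mB.
have mD P Q : measurable P -> measurable Q -> m mu (P `\` Q) = m mu P - m mu (P `&` Q).
  move=> mP mQ; have mPQ := measurableI _ _ mP mQ.
  apply/EFin_inj; rewrite EFinB !EFin_m ?measureD //; last exact: measurableD.
  by rewrite ltey_eq fin_num_measure.
have -> : msymd A B = m mu (A `\` B) + m mu (B `\` A).
  apply/EFin_inj; rewrite EFinD !EFin_m ?measureU //;
    try exact: measurableD; last exact: measurable_symd.
  by apply/seteqP; split => x // [[? ?] [? ?]].
rewrite !mD // setIC; lra.
Qed.

Lemma ae_comp {f : X -> X} {P : X -> Prop} :
  measurable_fun setT f -> (forall A, measurable A -> mu (f @^-1` A) = mu A) ->
  {ae mu, forall x, P x} -> {ae mu, forall x, P (f x)}.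
Proof.
move=> mf fmu [N [mN N0 PN]]; exists (f @^-1` N); split => //.
- by have := mf measurableT N mN; rewrite setTI.
- by rewrite fmu.
- by move=> x /= nPfx; apply: PN.
Qed.

End probability_m.

Section invertible_transformation.
Context {R : realType} {d : measure_display} {X : measurableType d}.
Context {mu : probability X R}.
Local Notation msymd A B := (m mu (symd A B)).
Context {U : mpt X}.
Variable hU : is_ipt mu U.

Lemma measurable_pre {A} : measurable A -> measurable (pre U A).
Proof. by case: hU => mf _ _ _ _ mA; have := mf measurableT A mA; rewrite setTI. Qed.

Lemma measurable_img {A} : measurable A -> measurable (img U A).
Proof. by case: hU => _ mf _ _ _ mA; have := mf measurableT A mA; rewrite setTI. Qed.

Lemma m_pre {A} : measurable A -> m mu (pre U A) = m mu A.
Proof. by case: hU => _ _ p _ _ mA; rewrite /m /pre p. Qed.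

Lemma m_img {A} : measurable A -> m mu (img U A) = m mu A.
Proof. by case: hU => _ _ _ p _ mA; rewrite /m /img p. Qed.

Lemma msymd_pre {A B} : measurable A -> measurable B -> msymd (pre U A) (pre U B) = msymd A B.
Proof. by move=> mA mB; rewrite -(m_pre (measurable_symd mA mB)). Qed.

Lemma msymd_img {A B} : measurable A -> measurable B -> msymd (img U A) (img U B) = msymd A B.
Proof. by move=> mA mB; rewrite -(m_img (measurable_symd mA mB)). Qed.

Lemma ae_fw {P : X -> Prop} : {ae mu, forall x, P x} -> {ae mu, forall x, P (fw U x)}.
Proof. by case: hU => mf _ p _ _; apply: ae_comp. Qed.

Lemma ae_bw {P : X -> Prop} : {ae mu, forall x, P x} -> {ae mu, forall x, P (bw U x)}.
Proof. by case: hU => _ mf _ p _; apply: ae_comp. Qed.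

Lemma msymd_pre_img {A} : measurable A -> msymd (pre U (img U A)) A = 0.
Proof.
move=> mA; case: hU => _ _ _ _ [[N [mN N0 sN]] _].
have mpiA := measurable_pre (measurable_img mA).
apply: (m_null (measurable_symd mpiA mA) mN N0) => x sx; apply: sN => /= bfx.
by case: sx => -[]; rewrite /pre /img /preimage /= bfx.
Qed.

Lemma m_pre_setI Y B : measurable Y -> measurable B ->
  m mu (pre U Y `&` B) = m mu (Y `&` img U B).
Proof.
move=> mY mB; have mpY := measurable_pre mY; have miB := measurable_img mB.
rewrite -[RHS](m_pre (measurableI _ _ mY miB)).
have : `|m mu (pre U (img U B) `&` pre U Y) - m mu (B `&` pre U Y)| <= 0.
  by rewrite -(msymd_pre_img mB); apply: dist_m_setI_le => //; exact: measurable_pre.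
by rewrite normr_le0 subr_eq0 => /eqP e; rewrite setIC -e setIC.
Qed.

End invertible_transformation.

Section conjugation.
Context {R : realType} {d : measure_display} {X : measurableType d}.
Context {mu : probability X R}.
Context {U : mpt X}.
Variable hU : is_ipt mu U.

Lemma is_ipt_conj {G : Type} {T : G -> mpt X} {g} :
  is_ipt mu (T g) -> is_ipt mu (conj U T g).
Proof.
move=> hTg; have [mfU mbU pfU pbU [aU1 aU2]] := hU.
have [mfT mbT pfT pbT [aT1 aT2]] := hTg.
split => /=.
- by apply: (measurableT_comp mbU); exact: (measurableT_comp mfT).
- by apply: (measurableT_comp mbU); exact: (measurableT_comp mbT).
- move=> A mA; have mUA := measurable_img hU mA.
  rewrite (_ : _ @^-1` A = pre U (pre (T g) (img U A))) //.
  by rewrite pfU ?pfT ?pbU //; exact: (measurable_pre hTg mUA).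
- move=> A mA; have mUA := measurable_img hU mA.
  rewrite (_ : _ @^-1` A = pre U (img (T g) (img U A))) //.
  by rewrite pfU ?pbT ?pbU //; exact: (measurable_img hTg mUA).
- split.
  + apply: filterS3 (ae_fw hU (ae_fw hTg aU2)) (ae_fw hU aT1) aU1 => x /= h1 h2 h3.
    by rewrite h1 h2 h3.
  + apply: filterS3 (ae_fw hU (ae_bw hTg aU2)) (ae_fw hU aT2) aU1 => x /= h1 h2 h3.
    by rewrite h1 h2 h3.
Qed.

Lemma img_conj {G : Type} {T : G -> mpt X} {g} A :
  img (conj U T g) A = pre U (img (T g) (img U A)).
Proof. by []. Qed.

Lemma pre_conj {G : Type} {T : G -> mpt X} {g} A :
  pre (conj U T g) A = pre U (pre (T g) (img U A)).
Proof. by []. Qed.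

Lemma m_conj_setI {G : Type} {T : G -> mpt X} {g A B} :
  is_ipt mu (T g) -> measurable A -> measurable B ->
  m mu (img (conj U T g) A `&` B) = m mu (img (T g) (img U A) `&` img U B).
Proof.
move=> hTg mA mB; rewrite img_conj (m_pre_setI hU) //.
exact: (measurable_img hTg (measurable_img hU mA)).
Qed.

Context {G : topologicalType} {mulG : G -> G -> G} {T : G -> mpt X}.
Variable hT : is_action mu mulG T.

Lemma is_ipt_action g : is_ipt mu (T g).
Proof. by case: hT. Qed.

Lemma is_action_conj : is_action mu mulG (conj U T).
Proof.
case: hT => _ hmul hcont; have [_ _ _ _ [_ aU2]] := hU; split.
- by move=> g; apply: is_ipt_conj; exact: is_ipt_action.
- move=> g h; apply: filterS2 (ae_fw hU (ae_fw (is_ipt_action h) aU2)) (ae_fw hU (hmul g h)).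
  by move=> x /= -> ->.
- move=> A B mA mB.
  rewrite (_ : (fun g => _) = fun g => m mu (img (T g) (img U A) `&` img U B)).
    by apply: hcont; exact: (measurable_img hU).
  by apply: funext => g; rewrite m_conj_setI //; exact: is_ipt_action.
Qed.

Lemma mixing_conj Gamma : mixing mu Gamma T -> mixing mu Gamma (conj U T).
Proof.
move=> hM A B mA mB eps eps0.
have [C [cC HC]] := hM _ _ (measurable_img hU mA) (measurable_img hU mB) eps eps0.
exists C; split => // g Gg nCg.
rewrite m_conj_setI //; last exact: is_ipt_action.
by rewrite -(m_img hU mA) -(m_img hU mB); exact: HC.
Qed.

End conjugation.

Section exp2V.
Context {R : realType}.

Lemma exp2V_ge0 i : (0 : R) <= 2 ^- i.
Proof. by rewrite invr_ge0 exprn_ge0. Qed.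

Lemma exp2V_le {i j} : (i <= j)%N -> (2 ^- j : R) <= 2 ^- i.
Proof.
move=> ij; rewrite lef_pV2 ?posrE ?exprn_gt0 //; apply: ler_weXn2l => //; lra.
Qed.

Lemma exists_exp2V_lt {x : R} : 0 < x -> exists N, 2 ^- N < x.
Proof.
move=> x0; have le_exp2 n : (n%:R : R) <= 2 ^+ n.
  elim: n => [|n IH]; first by rewrite expr0 ler01.
  by rewrite -natr1 exprS; have := exprn_ege1 n (ler1n R 2); lra.
exists (Num.Def.truncn x^-1).+1.
rewrite -[x]invrK ltf_pV2 ?posrE ?exprn_gt0 ?invr_gt0 //.
by rewrite !invrK; apply: lt_le_trans (truncnS_gt _) (le_exp2 _).
Qed.

Lemma sum_exp2V_le n : \sum_(i < n) (2 ^- i : R) <= 2.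
Proof.
elim: n => [|n IH]; first by rewrite big_ord0.
rewrite big_ord_recl /= expr0 invr1.
under eq_bigr => i _ do rewrite /bump /= add1n exprS invfM.
rewrite -mulr_sumr; lra.
Qed.

Lemma sum_exp2V_tail_le N n :
  \sum_(i < n) (if (N <= i)%N then 2 ^- i else 0 : R) <= 2 * 2 ^- N.
Proof.
elim: N n => [|N IH] n.
  by rewrite expr0 invr1 mulr1 (eq_bigr (fun i : 'I_n => 2 ^- i)) ?sum_exp2V_le.
case: n => [|n]; first by rewrite big_ord0 mulr_ge0 ?exp2V_ge0.
rewrite big_ord_recl /= add0r.
rewrite (eq_bigr (fun i : 'I_n => 2^-1 * (if (N <= i)%N then 2 ^- i else 0 : R))); last first.
  move=> i _; rewrite /bump /= add1n ltnS.
  by case: ifP => _; [rewrite exprS invfM|rewrite mulr0].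
by rewrite -mulr_sumr exprS invfM; have := IH n; lra.
Qed.

Local Open Scope ereal_scope.

Lemma nneseries_term_le (F : nat -> \bar R) k :
  (forall i, 0 <= F i) -> F k <= \sum_(i <oo) F i.
Proof.
move=> F0; apply: le_trans (nneseries_lim_ge k.+1 (fun n _ _ => F0 n)).
by rewrite big_nat_recr //= leeDr // sume_ge0.
Qed.

Lemma nneseries_exp2V_le (P : pred nat) (F : nat -> \bar R) (a c M : R) (N : nat) :
  (0 <= a)%R -> (0 <= c)%R -> (0 <= M)%R ->
  (forall i, P i -> 0 <= F i) ->
  (forall i, P i -> F i <= (a * 2 ^- i * M)%:E) ->
  (forall i, P i -> (i < N)%N -> F i <= (a * 2 ^- i * c)%:E) ->
  \sum_(i <oo | P i) F i <= (a * (2 * c + 2 * M * 2 ^- N))%:E.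
Proof.
move=> a0 c0 M0 F0 FM Fc.
apply: lime_le; first by apply: is_cvg_nneseries => n _; exact: F0.
apply: nearW => n; rewrite big_mkcond /=.
apply: (@le_trans _ _ (\sum_(0 <= i < n)
    ((a * (2 ^- i * c + M * (if (N <= i)%N then 2 ^- i else 0)))%:E))).
  apply: lee_sum => i _; have := exp2V_ge0 i; case: ifP => Pi p0; last first.
    by rewrite lee_fin mulr_ge0 // addr_ge0 ?mulr_ge0 //; case: ifP.
  case: (ltnP i N) => iN.
  - by apply: le_trans (Fc _ Pi iN) _; rewrite lee_fin -mulrA ler_wpM2l // mulr0 addr0.
  - by apply: le_trans (FM i Pi) _; rewrite lee_fin -mulrA ler_wpM2l //; nra.
rewrite sumEFin lee_fin big_mkord -mulr_sumr ler_wpM2l // big_split /= -mulr_suml -mulr_sumr.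
have := sum_exp2V_le n; have := sum_exp2V_tail_le N n; nra.
Qed.

End exp2V.

Section conjugate_estimates.
Context {R : realType} {d : measure_display} {X : measurableType d}.
Context {mu : probability X R}.
Local Notation msymd A B := (m mu (symd A B)).

Lemma near_msymd_lt {G : topologicalType} {Y : G -> set X} {c : R} {g0 : G} :
  (forall g, measurable (Y g)) -> (forall g, m mu (Y g) = c) ->
  continuous (fun g => m mu (Y g `&` Y g0)) ->
  forall e, 0 < e -> \forall g \near g0, msymd (Y g) (Y g0) < e.
Proof.
move=> mY Yc hc e e0; have e2 : 0 < e / 2 by lra.
apply: filterS (@cvgr_dist_lt _ _ _ _ (nbhs_filter g0) _ _ (hc g0) _ e2) => g /=.
rewrite setIid ltr_norml => /andP [h1 h2].
by rewrite msymdE // !Yc; have := Yc g0; lra.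
Qed.

Lemma msymd_conj_lt {S : set X -> set X} {U V : mpt X} {A B} {eta : R} :
  is_ipt mu U -> is_ipt mu V -> measurable A -> measurable B ->
  (forall Y, measurable Y -> measurable (S Y)) ->
  (forall Y Z, measurable Y -> measurable Z -> msymd (S Y) (S Z) = msymd Y Z) ->
  msymd (S (img U A)) B < eta -> msymd (pre U B) (pre V B) < eta ->
  msymd (img U A) (img V A) < eta ->
  msymd (pre U (S (img U A))) (pre V (S (img V A))) < 4 * eta.
Proof.
move=> hU hV mA mB mS iS h1 h2 h3.
have mUA := measurable_img hU mA; have mVA := measurable_img hV mA.
have mSU := mS _ mUA; have mSV := mS _ mVA.
have mpU Y : measurable Y -> measurable (pre U Y) := measurable_pre hU.
have mpV Y : measurable Y -> measurable (pre V Y) := measurable_pre hV.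
have t1 := msymd_triangle (mu:=mu) (mpU _ mSU) (mpV _ mSU) (mpV _ mSV).
have t2 := msymd_triangle (mu:=mu) (mpU _ mSU) (mpU _ mB) (mpV _ mSU).
have t3 := msymd_triangle (mu:=mu) (mpU _ mB) (mpV _ mB) (mpV _ mSU).
rewrite (msymd_pre hV mSU mSV) iS // in t1.
rewrite (msymd_pre hU mSU mB) in t2.
rewrite (msymd_pre hV mB mSU) (symdC B) in t3.
lra.
Qed.

Lemma dist_m_conj_le {G : Type} {T : G -> mpt X} {U V : mpt X} {g A B} :
  is_ipt mu (T g) -> is_ipt mu U -> is_ipt mu V -> measurable A -> measurable B ->
  `|m mu (img (conj U T g) A `&` B) - m mu (img (conj V T g) A `&` B)|
  <= msymd (img U A) (img V A) + msymd (img U B) (img V B).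
Proof.
move=> hTg hU hV mA mB.
have mUA := measurable_img hU mA; have mVA := measurable_img hV mA.
have mUB := measurable_img hU mB; have mVB := measurable_img hV mB.
have mTU := measurable_img hTg mUA; have mTV := measurable_img hTg mVA.
rewrite (m_conj_setI hU) // (m_conj_setI hV) //.
apply: le_trans (dist_m_le_msymd (measurableI _ _ mTU mUB) (measurableI _ _ mTV mVB)) _.
by apply: le_trans (msymd_setI mTU mUB mTV mVB) _; rewrite (msymd_img hTg).
Qed.

End conjugate_estimates.

Lemma compact_near_bounded_index (G : topologicalType) (C : set G) (Q : nat -> G -> Prop) :
  compact C -> (forall g0, C g0 -> exists k, \forall g \near g0, Q k g) ->
  \forall n \near \oo, forall g, C g -> exists2 k, (k <= n)%N & Q k g.
Proof.
move=> /compact_near_coveringP cC loc.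
apply: (cC nat (nbhs \oo) (fun n g => exists2 k, (k <= n)%N & Q k g)) => //.
move=> g Cg; have [k Qk] := loc g Cg.
exists (Q k, [set n | (k <= n)%N]) => /=; first by split => //; exists k.
by case=> h n /= [Qh kn]; exists k.
Qed.

Section weak_metrics.
Context {R : realType} {d : measure_display} {X : measurableType d}.
Context {mu : probability X R}.
Local Notation msymd A B := (m mu (symd A B)).
Variable Ai : nat -> set X.
Hypothesis Ai_meas : forall i, measurable (Ai i).
Hypothesis Ai_dense : forall A : set X, measurable A -> forall eps : R, 0 < eps ->
  exists i, msymd (Ai i) A < eps.
Context {G : topologicalType}.
Variables (Kidx : set nat) (K : nat -> set G).
Hypothesis K_compact : forall i, Kidx i -> compact (K i).
Hypothesis K_int : forall i, Kidx i -> interior (K i) !=set0.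

Lemma dA_ge0 (U V : mpt X) : (0 <= dA mu Ai U V)%E.
Proof.
by apply: nneseries_ge0 => n _ _; rewrite lee_fin mulr_ge0 ?exp2V_ge0 ?addr_ge0 ?m_ge0.
Qed.

Lemma dA_le_trunc {U V : mpt X} (c : R) (N : nat) :
  is_ipt mu U -> is_ipt mu V -> 0 <= c ->
  (forall j, (j < N)%N ->
     msymd (img U (Ai j)) (img V (Ai j)) + msymd (pre U (Ai j)) (pre V (Ai j)) <= c) ->
  (dA mu Ai U V <= (2 * c + 4 * 2 ^- N)%:E)%E.
Proof.
move=> hU hV c0 Hc.
have le2 j : msymd (img U (Ai j)) (img V (Ai j)) + msymd (pre U (Ai j)) (pre V (Ai j)) <= 2.
  have mAj := Ai_meas j.
  by apply: lerD; apply: m_le1; apply: measurable_symd;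
    first [exact: (measurable_img hU mAj)|exact: (measurable_img hV mAj)|
           exact: (measurable_pre hU mAj)|exact: (measurable_pre hV mAj)].
apply: le_trans (nneseries_exp2V_le xpredT _ 1 c 2 N _ _ _ _ _ _) _ => //.
- by move=> i _; rewrite lee_fin mulr_ge0 ?exp2V_ge0 ?addr_ge0 ?m_ge0.
- by move=> i _; rewrite lee_fin mul1r ler_wpM2l ?exp2V_ge0.
- by move=> i _ iN; rewrite lee_fin mul1r ler_wpM2l ?exp2V_ge0 ?Hc.
- by rewrite lee_fin mul1r; lra.
Qed.

Lemma dA_le8 (U V : mpt X) : is_ipt mu U -> is_ipt mu V -> (dA mu Ai U V <= 8%:E)%E.
Proof.
move=> hU hV; apply: le_trans (dA_le_trunc 2 0 hU hV _ _) _ => //.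
by rewrite expr0 invr1 lee_fin; lra.
Qed.

Lemma aA_le_trunc {U V : mpt X} (eta : R) (N : nat) :
  is_ipt mu U -> is_ipt mu V -> 0 <= eta -> eta <= 1/2 ->
  (forall i j, (i < N)%N -> (j < N)%N ->
     `|m mu (img U (Ai i) `&` Ai j) - m mu (img V (Ai i) `&` Ai j)| <= 2 * eta) ->
  (aA mu Ai U V <= (8 * eta + 12 * 2 ^- N)%:E)%E.
Proof.
move=> hU hV eta0 eta1 Ht.
have le1 i j : `|m mu (img U (Ai i) `&` Ai j) - m mu (img V (Ai i) `&` Ai j)| <= 1.
  have mI W : is_ipt mu W -> measurable (img W (Ai i) `&` Ai j).
    by move=> hW; exact: (measurableI _ _ (measurable_img hW (Ai_meas i)) (Ai_meas j)).
  apply: le_trans (dist_m_le_msymd (mI _ hU) (mI _ hV)) _.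
  by apply: m_le1; apply: measurable_symd; exact: mI.
have pN := exp2V_ge0 (R:=R) N.
have := exp2V_le (R:=R) (leq0n N); rewrite expr0 invr1 => pN1.
have row i : (\sum_(j <oo) ((2 ^- (i + j)) *
     `|m mu (img U (Ai i) `&` Ai j) - m mu (img V (Ai i) `&` Ai j)|)%:E <=
     (2 ^- i * (2 * (if (i < N)%N then 2 * eta else 1) + 2 * 1 * 2 ^- N))%:E)%E.
  apply: (nneseries_exp2V_le xpredT _ (2 ^- i) _ 1 N).
  - exact: exp2V_ge0.
  - by case: ifP => _; lra.
  - lra.
  - by move=> j _; rewrite lee_fin mulr_ge0 ?exp2V_ge0.
  - by move=> j _; rewrite lee_fin exprD invfM ler_wpM2l ?mulr_ge0 ?exp2V_ge0.
  - move=> j _ jN; rewrite lee_fin exprD invfM ler_wpM2l ?mulr_ge0 ?exp2V_ge0 //.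
    by case: ifP => iN; [exact: Ht|exact: le1].
apply: le_trans (nneseries_exp2V_le xpredT _ 1 (4 * eta + 2 * 2 ^- N) 4 N _ _ _ _ _ _) _.
- lra.
- lra.
- lra.
- by move=> i _; apply: nneseries_ge0 => n _ _; rewrite lee_fin mulr_ge0 ?exp2V_ge0.
- move=> i _; apply: le_trans (row i) _; rewrite lee_fin mul1r ler_wpM2l ?exp2V_ge0 //.
  by case: ifP => _; lra.
- move=> i _ iN; apply: le_trans (row i) _.
  by rewrite lee_fin mul1r ler_wpM2l ?exp2V_ge0 // iN; lra.
- by rewrite lee_fin mul1r; lra.
Qed.

Lemma dG_le_trunc {U V : G -> mpt X} (b : R) (N : nat) :
  0 <= b -> (forall g, is_ipt mu (U g)) -> (forall g, is_ipt mu (V g)) ->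
  (forall i g, (i < N)%N -> Kidx i -> K i g -> (dA mu Ai (U g) (V g) <= b%:E)%E) ->
  (dG mu Ai Kidx K U V <= (2 * b + 16 * 2 ^- N)%:E)%E.
Proof.
move=> b0 hU hV Hb.
have sup_ge0 i : Kidx i -> (0 <= ereal_sup [set dA mu Ai (U g) (V g) | g in K i])%E.
  move=> /K_int [g /interior_subset Kg].
  by apply: le_trans (dA_ge0 (U g) (V g)) _; apply: ereal_sup_ubound; exists g.
have p0 i : (0 <= (2 ^- i)%:E :> \bar R)%E by rewrite lee_fin exp2V_ge0.
apply: le_trans (nneseries_exp2V_le (fun i => i \in Kidx) _ 1 b 8 N _ b0 _ _ _ _) _.
- lra.
- lra.
- by move=> i /set_mem Ki; apply: mule_ge0 => //; exact: sup_ge0.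
- move=> i /set_mem Ki; rewrite mul1r EFinM lee_pmul ?sup_ge0 //.
  by apply: ge_ereal_sup => _ [g _ <-]; apply: dA_le8.
- move=> i /set_mem Ki iN; rewrite mul1r EFinM lee_pmul ?sup_ge0 //.
  by apply: ge_ereal_sup => _ [g Kg <-]; exact: Hb i g iN Ki Kg.
- by rewrite lee_fin mul1r; lra.
Qed.

Lemma msymd_lt_of_dA_lt {U V : mpt X} {eta : R} {n k} : 0 < eta -> (k <= n)%N ->
  (dA mu Ai U V < (eta * 2 ^- n)%:E)%E ->
  msymd (img U (Ai k)) (img V (Ai k)) + msymd (pre U (Ai k)) (pre V (Ai k)) < eta.
Proof.
move=> eta0 kn dUV; set D := _ + _.
have pk : 0 < (2 : R) ^- k by rewrite invr_gt0 exprn_gt0.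
have : ((2 ^- k * D)%:E <= dA mu Ai U V)%E.
  apply: nneseries_term_le => i.
  by rewrite lee_fin mulr_ge0 ?exp2V_ge0 ?addr_ge0 ?m_ge0.
move/le_lt_trans/(_ dUV); rewrite lte_fin => lt_kn.
rewrite -(ltr_pM2l pk); have := exp2V_le (R:=R) kn; nra.
Qed.

Lemma compact_near_approx {Y : G -> set X} {C : set G} {eta : R} :
  (forall g, measurable (Y g)) ->
  (forall g0 e, 0 < e -> \forall g \near g0, msymd (Y g) (Y g0) < e) ->
  compact C -> 0 < eta ->
  \forall n \near \oo, forall g, C g -> exists2 k, (k <= n)%N & msymd (Y g) (Ai k) < eta.
Proof.
move=> mY hY cC eta0; apply: compact_near_bounded_index cC _ => g0 _.
have eta2 : 0 < eta / 2 by lra.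
have [k hk] := Ai_dense _ (mY g0) _ eta2.
exists k; apply: filterS (hY g0 _ eta2) => g hg.
have := msymd_triangle (mu:=mu) (mY g) (mY g0) (Ai_meas k); rewrite (symdC (Y g0)); lra.
Qed.

Context {mulG : G -> G -> G} {T : G -> mpt X}.
Hypothesis hT : is_action mu mulG T.

Lemma near_msymd_img {B} : measurable B -> forall g0 e, 0 < e ->
  \forall g \near g0, msymd (img (T g) B) (img (T g0) B) < e.
Proof.
move=> mB g0; have mTB g := measurable_img (is_ipt_action hT g) mB.
apply: (near_msymd_lt (c := m mu B)) => // [g|].
  by rewrite (m_img (is_ipt_action hT g)).
by case: hT => _ _; apply.
Qed.

Lemma near_msymd_pre {B} : measurable B -> forall g0 e, 0 < e ->
  \forall g \near g0, msymd (pre (T g) B) (pre (T g0) B) < e.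
Proof.
move=> mB g0; have mTB g := measurable_pre (is_ipt_action hT g) mB.
apply: (near_msymd_lt (c := m mu B)) => // [g|].
  by rewrite (m_pre (is_ipt_action hT g)).
rewrite (_ : (fun g => _) = fun g => m mu (img (T g) (pre (T g0) B) `&` B)).
  by case: hT => _ _; apply.
by apply: funext => g; rewrite (m_pre_setI (is_ipt_action hT g)) // setIC.
Qed.

Definition orbit_approx (U : mpt X) (N n : nat) (eta : R) : Prop :=
  forall i j, (i < N)%N -> (j < N)%N -> Kidx i -> forall g, K i g ->
    (exists2 k, (k <= n)%N & msymd (img (T g) (img U (Ai j))) (Ai k) < eta) /\
    (exists2 k, (k <= n)%N & msymd (pre (T g) (img U (Ai j))) (Ai k) < eta).

Lemma near_orbit_approx {U : mpt X} (N : nat) {eta : R} : is_ipt mu U -> 0 < eta ->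
  \forall n \near \oo, orbit_approx U N n eta.
Proof.
move=> hU eta0.
have /filter_forall : forall p : 'I_N * 'I_N,
    \forall n \near \oo, Kidx p.1 -> forall g, K p.1 g ->
    (exists2 k, (k <= n)%N & msymd (img (T g) (img U (Ai p.2))) (Ai k) < eta) /\
    (exists2 k, (k <= n)%N & msymd (pre (T g) (img U (Ai p.2))) (Ai k) < eta).
  move=> [i j] /=; have [Ki|nKi] := pselect (Kidx i); last by apply: nearW => n /nKi.
  have mUj := measurable_img hU (Ai_meas j).
  have near_img := compact_near_approx (fun g => measurable_img (is_ipt_action hT g) mUj)
    (near_msymd_img mUj) (K_compact _ Ki) eta0.
  have near_pre := compact_near_approx (fun g => measurable_pre (is_ipt_action hT g) mUj)
    (near_msymd_pre mUj) (K_compact _ Ki) eta0.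
  by apply: filterS2 near_img near_pre => n h1 h2 _ g Kg; split; [exact: h1|exact: h2].
by apply: filterS => n H i j iN jN; exact: (H (Ordinal iN, Ordinal jN)).
Qed.

Lemma aA_sup_conj_le (Gamma : set G) {U V : mpt X} (eta : R) (N : nat) :
  is_ipt mu U -> is_ipt mu V -> 0 <= eta -> eta <= 1/2 ->
  (forall k, (k < N)%N -> msymd (img U (Ai k)) (img V (Ai k)) <= eta) ->
  (ereal_sup [set aA mu Ai (conj U T g) (conj V T g) | g in Gamma]
     <= (8 * eta + 12 * 2 ^- N)%:E)%E.
Proof.
move=> hU hV eta0 eta1 close; apply: ge_ereal_sup => _ [g _ <-].
have hTg := is_ipt_action hT g.
apply: (aA_le_trunc _ _ (is_ipt_conj hU hTg)) (is_ipt_conj hV hTg) eta0 eta1 _ => i j iN jN.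
apply: le_trans (dist_m_conj_le hTg hU hV (Ai_meas i) (Ai_meas j)) _.
by have := close i iN; have := close j jN; lra.
Qed.

Lemma dG_conj_le {U V : mpt X} {eta : R} {N n : nat} :
  is_ipt mu U -> is_ipt mu V -> 0 <= eta -> (N <= n)%N -> orbit_approx U N n eta ->
  (forall k, (k <= n)%N ->
    msymd (img U (Ai k)) (img V (Ai k)) + msymd (pre U (Ai k)) (pre V (Ai k)) < eta) ->
  (dG mu Ai Kidx K (conj U T) (conj V T)
     <= (2 * (2 * (8 * eta) + 4 * 2 ^- N) + 16 * 2 ^- N)%:E)%E.
Proof.
move=> hU hV eta0 Nn approx close.
have close_img k : (k <= n)%N -> msymd (img U (Ai k)) (img V (Ai k)) < eta.
  by move=> /close; have := m_ge0 (mu:=mu) (symd (pre U (Ai k)) (pre V (Ai k))); lra.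
have close_pre k : (k <= n)%N -> msymd (pre U (Ai k)) (pre V (Ai k)) < eta.
  by move=> /close; have := m_ge0 (mu:=mu) (symd (img U (Ai k)) (img V (Ai k))); lra.
have ipt_conj W g : is_ipt mu W -> is_ipt mu (conj W T g).
  by move=> hW; exact: (is_ipt_conj hW (is_ipt_action hT g)).
apply: (dG_le_trunc _ _ _ (ipt_conj _ ^~ hU)) (ipt_conj _ ^~ hV) _ => [|i g iN Ki Kg].
  by have := exp2V_ge0 (R:=R) N; lra.
have hTg := is_ipt_action hT g.
apply: (dA_le_trunc _ _ (ipt_conj _ _ hU)) (ipt_conj _ _ hV) _ _ => [|j jN]; first lra.
have [[k1 k1n h1] [k2 k2n h2]] := approx i j iN jN Ki g Kg.
have jn : (j <= n)%N by apply: leq_trans Nn; exact: ltnW.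
have := msymd_conj_lt hU hV (Ai_meas j) (Ai_meas k1) (fun _ => measurable_img hTg)
  (fun _ _ => msymd_img hTg) h1 (close_pre k1 k1n) (close_img j jn).
have := msymd_conj_lt hU hV (Ai_meas j) (Ai_meas k2) (fun _ => measurable_pre hTg)
  (fun _ _ => msymd_pre hTg) h2 (close_pre k2 k2n) (close_img j jn).
by rewrite !img_conj !pre_conj; lra.
Qed.

Lemma leash_conj_continuous (Gamma : set G) (U : mpt X) : is_ipt mu U ->
  forall eps : R, 0 < eps -> exists delta : R, 0 < delta /\
    forall V, is_ipt mu V -> (dA mu Ai U V < delta%:E)%E ->
      (leash mu Ai Kidx K Gamma (conj U T) (conj V T) < eps%:E)%E.
Proof.
(* The bounds below add up to 40 eta + 36 2^-N < 80 eta. *)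
move=> hU eps eps0; pose eta := Num.min eps 1 / 80.
have eta0 : 0 < eta by rewrite divr_gt0 // lt_min eps0 ltr01.
have eta_eps : eta * 80 <= eps by rewrite mulfVK // ge_min lexx.
have eta1 : eta <= 1/2.
  have : Num.min eps 1 <= 1 by rewrite ge_min lexx orbT.
  rewrite /eta; lra.
have [N N_eta] := exists_exp2V_lt eta0.
have [n [approx Nn]] := filter_ex (filterI (near_orbit_approx N hU eta0) (nbhs_infty_ge N)).
exists (eta * 2 ^- n); split=> [|V hV dUV]; first by rewrite mulr_gt0 // invr_gt0 exprn_gt0.
have close k (kn : (k <= n)%N) := msymd_lt_of_dA_lt eta0 kn dUV.
have hdG := dG_conj_le hU hV (ltW eta0) Nn approx close.
have /(aA_sup_conj_le Gamma eta N hU hV (ltW eta0) eta1) hsup :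
    forall k, (k < N)%N -> msymd (img U (Ai k)) (img V (Ai k)) <= eta.
  move=> k kN; have := close k (leq_trans (ltnW kN) Nn).
  by have := m_ge0 (mu:=mu) (symd (pre U (Ai k)) (pre V (Ai k))); lra.
rewrite /leash; apply: le_lt_trans (leeD hdG hsup) _.
by rewrite -EFinD lte_fin; lra.
Qed.

End weak_metrics.

Theorem mainTheorem11
  (R : realType) (d : measure_display) (X : measurableType d)
  (mu : probability X R) (mu_nonatomic : nonatomic mu)
  (Ai : nat -> set X) (Ai_meas : forall i, measurable (Ai i))
  (Ai_gen : <<s range Ai >> = measurable)
  (Ai_dense : forall A : set X, measurable A -> forall eps : R, 0 < eps ->
      exists i, m mu (symd (Ai i) A) < eps)
  (G : topologicalType) (mulG : G -> G -> G) (invG : G -> G) (oneG : G)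
  (G_group : is_topological_group mulG invG oneG)
  (G_hausdorff : hausdorff_space G)
  (G_lc : locally_compact [set: G])
  (G_fc : @first_countable_space G)
  (Kidx : set nat) (K : nat -> set G)
  (K_compact : forall i, Kidx i -> compact (K i))
  (K_int : forall i, Kidx i -> interior (K i) !=set0)
  (K_gen : exists S : set G, S `<=` \bigcup_(i in Kidx) K i /\
             gen_subgroup mulG invG oneG S = setT)
  (Gamma : set G) (Gamma_unbounded : unbounded Gamma)
  (T : G -> mpt X) (T_action : is_action mu mulG T) (T_mixing : mixing mu Gamma T) :
  (forall U, is_ipt mu U ->
     is_action mu mulG (conj U T) /\ mixing mu Gamma (conj U T)) /\
  (forall U, is_ipt mu U -> forall eps : R, 0 < eps ->
     exists delta : R, 0 < delta /\
       forall V, is_ipt mu V -> (dA mu Ai U V < delta%:E)%E ->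
         (leash mu Ai Kidx K Gamma (conj U T) (conj V T) < eps%:E)%E).
Proof.
(* Only the density of (Ai), the compactness and nonempty interiors of the K i, and the
   action and mixing hypotheses on T are used. *)
split=> U hU.
  by split; [exact: is_action_conj | exact: (mixing_conj hU T_action Gamma T_mixing)].
exact: (leash_conj_continuous Ai Ai_meas Ai_dense Kidx K K_compact K_int T_action Gamma U hU).
Qed.
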